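(* Let $p(L,M,D;\mu\to1)$ be a generative reasoning model, let $\alpha\in L$, and let $\Delta\subseteq L$ be finite. Then $$p(\alpha\mid\Delta)=\frac{\sum_{m\in[\![\Delta]\!]_p^{\max}\cap[\![\alpha]\!]_p}p(m)}{\sum_{m\in[\![\Delta]\!]_p^{\max}}p(m)}.$$
   Context: Fix a multiset of data $\{d_1,\dots,d_K\}$ with $K\ge1$, and a propositional language $L$ over finitely many atoms, with set of models (truth assignments) $\mathcal M$. A function $m:\{d_1,\dots,d_K\}\to\mathcal M$ assigns to each datum the model it supports. The probability of a model $n$ is $p(n)=|\{k:m(d_k)=n\}|/K$. For $\mu\in(0,1)$ and $\alpha\in L$, set $p(\alpha\mid m)=\mu$ if $m$ satisfies $\alpha$ and $1-\mu$ otherwise. For finite $\Delta$, set $p(\Delta\mid m)=\prod_{\beta\in\Delta}p(\beta\mid m)$, which is $1$ for empty $\Delta$. In $p(L,M,D;\mu\to1)$, $$p(\alpha\mid\Delta)=\lim_{\mu\to1^-}\frac{\sum_{m}p(\alpha\mid m)p(\Delta\mid m)p(m)}{\sum_m p(\Delta\mid m)p(m)}.$$ Notation and definitions: - For $S\subseteq L$, $[\![S]\!]$ is the set of models satisfying every formula of $S$, $[\![\alpha]\!]=[\![\{\alpha\}]\!]$, and $[\![S]\!]_p=\{m\in[\![S]\!]:p(m)\neq0\}$. - $S\subseteq\Delta$ is a maximal possible subset of $\Delta$ if $[\![S]\!]_p\neq\emptyset$ and $[\![S\cup\{\beta\}]\!]_p=\emptyset$ for all $\beta\in\Delta\setminus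 S$. - $MPS(\Delta)$ is the set of maximal possible subsets of $\Delta$ of maximum cardinality. - $[\![\Delta]\!]_p^{\max}=\bigcup_{S\in MPS(\Delta)}[\![S]\!]_p$. *)

From HB Require Import structures.
From mathcomp Require Import all_boot all_order all_algebra.
From mathcomp Require Import finmap.
From mathcomp Require Import all_classical all_reals all_analysis.

Set Implicit Arguments.
Unset Strict Implicit.
Unset Printing Implicit Defensive.

Import Order.TTheory GRing.Theory Num.Theory.
Local Open Scope ring_scope.

Inductive prop (n : nat) : Type :=
| Atom of 'I_n
| Neg of prop n
| And of prop n & prop n
| Or of prop n & prop n
| Impl of prop n & prop n.

Arguments Atom {n}.

Section FormCount.
Variable n : nat.

Fixpoint form_enc (f : prop n) : GenTree.tree 'I_n :=
  match f with
  | Atom a => GenTree.Leaf a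
  | Neg g => GenTree.Node 0 [:: form_enc g]
  | And g h => GenTree.Node 1 [:: form_enc g; form_enc h]
  | Or g h => GenTree.Node 2 [:: form_enc g; form_enc h]
  | Impl g h => GenTree.Node 3 [:: form_enc g; form_enc h]
  end.

Fixpoint form_dec (t : GenTree.tree 'I_n) : option (prop n) :=
  match t with
  | GenTree.Leaf a => Some (Atom a)
  | GenTree.Node 0 [:: g] =>
      if form_dec g is Some g' then Some (Neg g') else None
  | GenTree.Node 1 [:: g; h] =>
      match form_dec g, form_dec h with Some g', Some h' => Some (And g' h') | _, _ => None end
  | GenTree.Node 2 [:: g; h] =>
      match form_dec g, form_dec h with Some g', Some h' => Some (Or g' h') | _, _ => None end
  | GenTree.Node 3 [:: g; h] =>
      match form_dec g, form_dec h with Some g', Some h' => Some (Impl g' h') | _, _ => None end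
  | _ => None
  end.

Lemma form_encK : pcancel form_enc form_dec.
Proof. by elim=> [a|g /= ->|g /= -> h ->|g /= -> h ->|g /= -> h ->]. Qed.

HB.instance Definition _ := Countable.copy (prop n) (pcan_type form_encK).
End FormCount.

Definition model (n : nat) := {ffun 'I_n -> bool}.

Fixpoint sat (n : nat) (w : model n) (f : prop n) : bool :=
  match f with
  | Atom a => w a
  | Neg g => ~~ sat w g
  | And g h => sat w g && sat w h
  | Or g h => sat w g || sat w h
  | Impl g h => sat w g ==> sat w h
  end.

Local Open Scope fset_scope.

Section GRM.
Variables (R : realType) (n K : nat).
(* the data are d_1..d_K, indexed by 'I_K; m k is the model supported by d_k *)
Variable m : 'I_K -> model n.

Definition pmod (w : model n) : R := #|[set k | m k == w]|%:R / K%:R.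

Definition pform (mu : R) (a : prop n) (w : model n) : R :=
  if sat w a then mu else 1 - mu.

Definition pset (mu : R) (D : {fset prop n}) (w : model n) : R :=
  \prod_(b <- D) pform mu b w.

(* the ratio whose limit mu -> 1^- defines p(alpha | Delta) *)
Definition pcond_mu (a : prop n) (D : {fset prop n}) (mu : R) : R :=
  (\sum_(w : model n) pform mu a w * pset mu D w * pmod w) /
  (\sum_(w : model n) pset mu D w * pmod w).

Definition in_semp (S : {fset prop n}) (w : model n) : Prop :=
  (forall b, b \in S -> sat w b) /\ pmod w != 0.

Definition max_possible (D S : {fset prop n}) : Prop :=
  S `<=` D /\ (exists w, in_semp S w) /\
  (forall b, b \in D -> b \notin S -> forall w, ~ in_semp (b |` S) w).

Definition MPS (D S : {fset prop n}) : Prop :=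
  max_possible D S /\ (forall S', max_possible D S' -> #|` S'| <= #|` S|)%N.

Definition in_semp_max (D : {fset prop n}) (w : model n) : Prop :=
  exists S, MPS D S /\ in_semp S w.

End GRM.

From Pilot Require Import Defs.
From HB Require Import structures.
From mathcomp Require Import all_boot all_order all_algebra.
From mathcomp Require Import finmap.
From mathcomp Require Import all_classical all_reals all_analysis.
From mathcomp Require Import ring zify.

(* Write nfalse w for the number of formulas of Delta falsified by w, and E for
   its minimum over the possible models.  A subset of Delta satisfied by a
   possible model w has at most |Delta| - nfalse w elements, and the set of all
   formulas of Delta true in w reaches that bound; hence the maximum possible
   subsets of maximum cardinality have exactly |Delta| - E elements, and
   [[Delta]]_p^max is the set of possible models with nfalse w = E.  Since
   p(Delta | w) = mu^(|Delta| - nfalse w) (1 - mu)^(nfalse w), dividing both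
   sums of p(alpha | Delta) by (1 - mu)^E leaves two polynomials in mu, whose
   values at mu = 1 are the two sums of the theorem; the denominator is
   positive there, so the limit is their ratio. *)

Set Implicit Arguments.
Unset Strict Implicit.
Unset Printing Implicit Defensive.

Import Order.TTheory GRing.Theory Num.Theory.
Import numFieldNormedType.Exports.
Local Open Scope ring_scope.
Local Open Scope classical_set_scope.

Lemma cvg_at_left_horner_div (R : realType) (p q : {poly R}) (x : R) :
  q.[x] != 0 -> p.[y] / q.[y] @[y --> x^'-] --> p.[x] / q.[x].
Proof.
move=> qx_neq0; apply: cvg_at_left_filter.
exact: (cvgM (@continuous_horner R p x) (cvgV qx_neq0 (@continuous_horner R q x))).
Qed.

Section SatisfiedPart.
Variable n : nat.
Implicit Types (D : {fset prop n}) (w : model n).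

Definition nsat D w := count (sat w) D.
Definition nfalse D w := count (predC (sat w)) D.
Definition sat_part D w : {fset prop n} := [fset b in [seq b <- D | sat w b]]%fset.

Lemma nsat_add_nfalse D w : (nsat D w + nfalse D w)%N = #|` D|.
Proof. exact: count_predC. Qed.

Lemma card_sat_part D w : #|` sat_part D w| = nsat D w.
Proof. by rewrite card_fseq undup_id ?filter_uniq ?fset_uniq // size_filter. Qed.

Lemma mem_sat_part D w b : (b \in sat_part D w) = (b \in D) && sat w b.
Proof. by rewrite in_fset /= mem_filter andbC. Qed.

Lemma sat_part_sub D w : (sat_part D w `<=` D)%fset.
Proof. by apply/fsubsetP => b; rewrite mem_sat_part => /andP[]. Qed.

Lemma pset_nsat_nfalse (R : realType) (mu : R) D w :
  Defs.pset mu D w = mu ^+ nsat D w * (1 - mu) ^+ nfalse D w.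
Proof.
rewrite /Defs.pset /nsat /nfalse /pform; elim: (enum_fset D) => [|b s IH].
  by rewrite big_nil /= !expr0 mulr1.
by rewrite big_cons IH /=; case: (sat w b); rewrite /= ?add0n ?add1n !exprS; ring.
Qed.

End SatisfiedPart.

Section GenerativeModel.
Variables (R : realType) (n K : nat) (m : 'I_K -> model n).
Implicit Types (S D : {fset prop n}) (w : model n) (a : prop n).

Local Notation pmod := (pmod R m).
Local Notation in_semp := (in_semp R m).

Lemma pmod_ge0 w : 0 <= pmod w.
Proof. by rewrite /pmod divr_ge0 ?ler0n. Qed.

Lemma pmod_neq0 (k : 'I_K) : pmod (m k) != 0.
Proof.
have K_gt0 : (0 < K)%N by apply: leq_ltn_trans (ltn_ord k).
rewrite /pmod mulf_neq0 ?invr_eq0 ?pnatr_eq0 -?lt0n // card_gt0.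
by apply/set0Pn; exists k; rewrite inE.
Qed.

Lemma in_semp_fset1 a w : in_semp [fset a]%fset w <-> sat w a /\ pmod w != 0.
Proof.
split=> [[sat_a pw]|[sat_a pw]]; first by split=> //; apply: sat_a; rewrite in_fset1.
by split=> // b; rewrite in_fset1 => /eqP ->.
Qed.

Lemma in_semp_sub_sat_part S D w :
  in_semp S w -> (S `<=` D)%fset -> (S `<=` sat_part D w)%fset.
Proof.
move=> [satS _] /fsubsetP SD; apply/fsubsetP => b bS.
by rewrite mem_sat_part SD // satS.
Qed.

Lemma in_semp_sat_part D w : pmod w != 0 -> in_semp (sat_part D w) w.
Proof. by move=> pw; split=> // b; rewrite mem_sat_part => /andP[]. Qed.

Hypothesis K_gt0 : (0 < K)%N.
Variable D : {fset prop n}.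

Definition least_falsifying_model :=
  [arg min_(w < m (Ordinal K_gt0) | pmod w != 0) nfalse D w].

Definition min_nfalse := nfalse D least_falsifying_model.

Lemma pmod_least_falsifying_model : pmod least_falsifying_model != 0.
Proof. by rewrite /least_falsifying_model; case: arg_minnP; rewrite ?pmod_neq0. Qed.

Lemma min_nfalse_le w : pmod w != 0 -> (min_nfalse <= nfalse D w)%N.
Proof.
rewrite /min_nfalse /least_falsifying_model.
by case: arg_minnP => [|w0 _ w0_min /w0_min //]; rewrite pmod_neq0.
Qed.

Lemma max_possible_card S :
  max_possible R m D S -> (#|` S| <= #|` D| - min_nfalse)%N.
Proof.
move=> [SD [[w wS] _]].
have := fsubset_leq_card (in_semp_sub_sat_part wS SD); rewrite card_sat_part.
have := min_nfalse_le wS.2; have := nsat_add_nfalse D w; lia.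
Qed.

Lemma MPS_sat_part w :
  pmod w != 0 -> nfalse D w = min_nfalse -> MPS R m D (sat_part D w).
Proof.
move=> pw w_min; have w_card := nsat_add_nfalse D w.
have w_max : max_possible R m D (sat_part D w).
  split; first exact: sat_part_sub.
  split=> [|b bD bS w' w'bS]; first by exists w; exact: in_semp_sat_part.
  have bSD : (b |` sat_part D w `<=` D)%fset by rewrite fsubUset fsub1set bD sat_part_sub.
  have := fsubset_leq_card (in_semp_sub_sat_part w'bS bSD).
  rewrite cardfsU1 bS !card_sat_part /=.
  have := min_nfalse_le w'bS.2; have := nsat_add_nfalse D w'; lia.
by split=> // S' /max_possible_card; rewrite card_sat_part; lia.
Qed.

Lemma in_semp_maxP w :
  pmod w != 0 -> in_semp_max R m D w <-> nfalse D w = min_nfalse.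
Proof.
move=> pw; split=> [[S [[[SD _] S_max] wS]]|w_min]; last first.
  by exists (sat_part D w); split; [exact: MPS_sat_part | exact: in_semp_sat_part].
have opt_MPS := MPS_sat_part pmod_least_falsifying_model erefl.
have := S_max _ opt_MPS.1; rewrite card_sat_part.
have := fsubset_leq_card (in_semp_sub_sat_part wS SD); rewrite card_sat_part.
have := min_nfalse_le pw; have := nsat_add_nfalse D w.
have := nsat_add_nfalse D least_falsifying_model; rewrite -/min_nfalse; lia.
Qed.

(* p(Delta | w) divided by the factor (1 - mu)^E common to all possible models;
   the truncated subtraction only bites on models with p(w) = 0. *)
Definition pset_scaled w : {poly R} :=
  'X^(nsat D w) * (1 - 'X) ^+ (nfalse D w - min_nfalse).

Definition pform_poly a w : {poly R} := if sat w a then 'X else 1 - 'X.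

Definition num_poly a : {poly R} :=
  \sum_w pform_poly a w * pset_scaled w * (pmod w)%:P.

Definition den_poly : {poly R} := \sum_w pset_scaled w * (pmod w)%:P.

Lemma pset_scaled_horner (mu : R) w :
  (pset_scaled w).[mu] = mu ^+ nsat D w * (1 - mu) ^+ (nfalse D w - min_nfalse).
Proof. by rewrite hornerM hornerXn horner_exp hornerD hornerN hornerX hornerC. Qed.

Lemma pset_pmod_scaled (mu : R) w :
  Defs.pset mu D w * pmod w = (1 - mu) ^+ min_nfalse * (pset_scaled w).[mu] * pmod w.
Proof.
have [->|pw] := eqVneq (pmod w) 0; first by rewrite !mulr0.
rewrite pset_nsat_nfalse -{1}(subnKC (min_nfalse_le pw)) exprD.
by rewrite pset_scaled_horner; congr (_ * _); exact: mulrCA.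
Qed.

Lemma pform_horner a (mu : R) w : pform mu a w = (pform_poly a w).[mu].
Proof. by rewrite /pform /pform_poly; case: ifP; rewrite ?hornerD ?hornerN hornerX ?hornerC. Qed.

Lemma pcond_mu_horner a (mu : R) :
  mu != 1 -> pcond_mu m a D mu = (num_poly a).[mu] / den_poly.[mu].
Proof.
move=> mu_neq1; rewrite /pcond_mu /num_poly /den_poly !horner_sum.
have scale_num : \sum_w pform mu a w * Defs.pset mu D w * pmod w =
    (1 - mu) ^+ min_nfalse * \sum_w (pform_poly a w * pset_scaled w * (pmod w)%:P).[mu].
  rewrite mulr_sumr; apply: eq_bigr => w _.
  rewrite [in RHS]hornerM hornerC [in RHS]hornerM -pform_horner -mulrA pset_pmod_scaled.
  by rewrite !mulrA [_ * (1 - mu) ^+ _]mulrC.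
have scale_den : \sum_w Defs.pset mu D w * pmod w =
    (1 - mu) ^+ min_nfalse * \sum_w (pset_scaled w * (pmod w)%:P).[mu].
  rewrite mulr_sumr; apply: eq_bigr => w _.
  by rewrite [in RHS]hornerM hornerC pset_pmod_scaled -mulrA.
rewrite scale_num scale_den invfM mulrACA mulfV ?mul1r //.
by rewrite expf_neq0 // subr_eq0 eq_sym.
Qed.

Lemma den_term_horner1 w :
  (pset_scaled w * (pmod w)%:P).[1] = if `[< in_semp_max R m D w >] then pmod w else 0.
Proof.
rewrite hornerM hornerC; have [->|pw] := eqVneq (pmod w) 0; first by rewrite mulr0 if_same.
rewrite (asbool_equiv_eqP eqP (in_semp_maxP pw)) eqn_leq min_nfalse_le // andbT.
rewrite pset_scaled_horner subrr expr1n mul1r expr0n subn_eq0.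
by case: ifP; rewrite ?mul1r ?mul0r.
Qed.

Lemma num_term_horner1 a w :
  (pform_poly a w * pset_scaled w * (pmod w)%:P).[1] =
  if `[< in_semp_max R m D w /\ in_semp [fset a]%fset w >] then pmod w else 0.
Proof.
rewrite -mulrA hornerM den_term_horner1 asbool_and /pform_poly.
have [->|pw] := eqVneq (pmod w) 0; first by rewrite !if_same mulr0.
have -> : `[< in_semp [fset a]%fset w >] = sat w a.
  by apply: asbool_equiv_eqP idP _; rewrite in_semp_fset1; split=> [[]|].
by case: (sat w a); case: ifP; rewrite ?hornerD ?hornerN hornerX ?hornerC ?subrr ?mul1r ?mul0r ?mulr0.
Qed.

Lemma den_poly_horner1 : den_poly.[1] = \sum_(w | `[< in_semp_max R m D w >]) pmod w.
Proof. by rewrite big_mkcond horner_sum; apply: eq_bigr => w _; exact: den_term_horner1. Qed.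

Lemma num_poly_horner1 a :
  (num_poly a).[1] =
  \sum_(w | `[< in_semp_max R m D w /\ in_semp [fset a]%fset w >]) pmod w.
Proof. by rewrite big_mkcond horner_sum; apply: eq_bigr => w _; exact: num_term_horner1. Qed.

Lemma den_poly_horner1_gt0 : 0 < den_poly.[1].
Proof.
have opt_max : `[< in_semp_max R m D least_falsifying_model >].
  by apply/asboolP/in_semp_maxP; first exact: pmod_least_falsifying_model.
rewrite den_poly_horner1 (bigD1 _ opt_max) /= ltr_wpDr //.
  by apply: sumr_ge0 => w _; exact: pmod_ge0.
by rewrite lt0r pmod_least_falsifying_model pmod_ge0.
Qed.

End GenerativeModel.

Theorem theorem4 (R : realType) (n K : nat) (m : 'I_K -> model n)
  (HK : (1 <= K)%N) (a : prop n) (D : {fset prop n}) :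
  pcond_mu m a D mu @[mu --> (1 : R)^'-] -->
    ((\sum_(w : model n | `[< in_semp_max R m D w /\
                             in_semp R m [fset a]%fset w >]) pmod R m w) /
     (\sum_(w : model n | `[< in_semp_max R m D w >]) pmod R m w)).
Proof.
rewrite -(num_poly_horner1 R m HK) -(den_poly_horner1 R m HK).
have den_neq0 := lt0r_neq0 (den_poly_horner1_gt0 R m HK D).
apply: cvg_trans (cvg_at_left_horner_div (p := num_poly R m HK D a) den_neq0).
apply: near_eq_cvg; near=> mu.
have mu_neq1 : mu != 1 by near: mu; exact: nbhs_left_neq.
by rewrite pcond_mu_horner.
Unshelve. all: by end_near.
Qed.
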